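(* Let $X$ be a geodesic $\delta$--hyperbolic space ($\delta\geqslant0$), $x_0\in X$, and let $u_1,u_2,v,w_1,w_2$ be isometries of $X$ with $g:=u_1vw_1=u_2vw_2$ such that the products $u_1v$, $u_2v$, $vw_1$, $vw_2$ are reduced at $x_0$. Assume $|vx_0-x_0|>26\delta$, $|u_1x_0-u_2x_0|\leqslant|vx_0-x_0|$ and $|u_1x_0-x_0|\leqslant|u_2x_0-x_0|$. Then the points $u_1x_0$, $u_2x_0$, $u_1vx_0$ and $u_2vx_0$ are at distance at most $6\delta$ from any geodesic segment $[x_0,gx_0]$.
   Context: Distance $|x-y|$; Gromov product $(p,q)_x:=\frac12(|p-x|+|q-x|-|p-q|)$; $X$ is $\delta$--hyperbolic if $(p,r)_x\geqslant\min\{(p,q)_x,(q,r)_x\}-\delta$ for all $p,q,r,x$. The product $uv$ of two isometries is reduced at $x_0$ if $(u^{-1}x_0,vx_0)_{x_0}\leqslant\delta$. *)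

From Stdlib Require Import Reals Lra.
Open Scope R_scope.

Definition is_metric {X : Type} (d : X -> X -> R) : Prop :=
  (forall x y, 0 <= d x y) /\
  (forall x y, d x y = 0 <-> x = y) /\
  (forall x y, d x y = d y x) /\
  (forall x y z, d x z <= d x y + d y z).

Definition gromov {X : Type} (d : X -> X -> R) (x p q : X) : R :=
  (d p x + d q x - d p q) / 2.

Definition hyperbolic {X : Type} (d : X -> X -> R) (delta : R) : Prop :=
  forall p q r x,
    gromov d x p r >= Rmin (gromov d x p q) (gromov d x q r) - delta.

Definition geodesic_segment {X : Type} (d : X -> X -> R) (a b : X)
  (gamma : R -> X) : Prop :=
  gamma 0 = a /\ gamma (d a b) = b /\
  (forall s t, 0 <= s <= d a b -> 0 <= t <= d a b ->
     d (gamma s) (gamma t) = Rabs (s - t)).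

Definition geodesic_space {X : Type} (d : X -> X -> R) : Prop :=
  forall a b, exists gamma, geodesic_segment d a b gamma.

Definition isometry {X : Type} (d : X -> X -> R) (f : X -> X) : Prop :=
  (forall x y, d (f x) (f y) = d x y) /\
  exists g : X -> X, (forall x, g (f x) = x) /\ (forall x, f (g x) = x).

(* The product u v (acting as x |-> u (v x)) is reduced at x0:
   (u^{-1} x0, v x0)_{x0} <= delta, where u^{-1} x0 is the (unique) preimage
   of x0 under the bijection u. *)
Definition reduced_at {X : Type} (d : X -> X -> R) (delta : R) (x0 : X)
  (u v : X -> X) : Prop :=
  forall y, u y = x0 -> gromov d x0 y (v x0) <= delta.

Definition near_segment {X : Type} (d : X -> X -> R) (a b : X)
  (gamma : R -> X) (p : X) (r : R) : Prop :=
  exists t, 0 <= t <= d a b /\ d p (gamma t) <= r.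

(* Each factorisation g = u v w with u v and v w reduced at x0 gives a broken
   geodesic x0, u x0, u v x0, g x0 whose Gromov products at the two corners are
   at most delta.  Since the middle piece has length |v x0 - x0| > 3 delta, one
   application of hyperbolicity at each corner shows that (x0, g x0) seen from
   that corner is at most 2 delta, and a point p with (x, z)_p <= r lies within
   r + 2 delta of any geodesic [x, z].  The two factorisations are handled
   independently. *)
From Stdlib Require Import Reals Lra.
Open Scope R_scope.

Section Hyperbolic.

Variables (X : Type) (d : X -> X -> R) (delta : R).
Hypothesis metric_d : is_metric d.
Hypothesis hyperbolic_d : hyperbolic d delta.

Lemma dist_sym x y : d x y = d y x.
Proof. apply metric_d. Qed.

Lemma dist_triangle x y z : d x z <= d x y + d y z.
Proof. apply metric_d. Qed.

Lemma gromov_comm x p q : gromov d x p q = gromov d x q p.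
Proof. unfold gromov; rewrite (dist_sym p q); lra. Qed.

Lemma gromov_add_dist a b p : gromov d a p b + gromov d b p a = d a b.
Proof. unfold gromov; rewrite (dist_sym b a), (dist_sym p a), (dist_sym p b); lra. Qed.

Lemma hyperbolic_cases x p q r :
  gromov d x p r >= gromov d x p q - delta \/
  gromov d x p r >= gromov d x q r - delta.
Proof.
  pose proof (hyperbolic_d p q r x) as H.
  unfold Rmin in H; destruct (Rle_dec (gromov d x p q) (gromov d x q r)); lra.
Qed.

Lemma gromov_isometry f x p q :
  isometry d f -> gromov d (f x) (f p) (f q) = gromov d x p q.
Proof. intros [Hf _]; unfold gromov; rewrite !Hf; reflexivity. Qed.

Lemma segment_dist_start a b gamma t :
  geodesic_segment d a b gamma -> 0 <= t <= d a b -> d a (gamma t) = t.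
Proof.
  intros (G0 & _ & Gd) Ht.
  rewrite <- G0 at 1; rewrite Gd by lra.
  rewrite Rabs_left1; lra.
Qed.

Lemma segment_dist_end a b gamma t :
  geodesic_segment d a b gamma -> 0 <= t <= d a b -> d (gamma t) b = d a b - t.
Proof.
  intros (_ & G1 & Gd) Ht.
  rewrite <- G1 at 1; rewrite Gd by lra.
  rewrite Rabs_left1; lra.
Qed.

(* The witness is the point of [x, z] at distance (p, z)_x from x: hyperbolicity
   at x for p, z and that point bounds its distance to p by (x, z)_p + 2 delta. *)
Lemma near_segment_gromov x z gamma p :
  geodesic_segment d x z gamma ->
  near_segment d x z gamma p (gromov d p x z + 2 * delta).
Proof.
  intros Hg.
  set (t := gromov d x p z).
  assert (Ht : 0 <= t <= d x z).
  { unfold t, gromov.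
    pose proof (dist_triangle p x z); pose proof (dist_triangle x z p).
    pose proof (dist_sym p x); pose proof (dist_sym z x); pose proof (dist_sym z p).
    lra. }
  exists t; split; [exact Ht|].
  pose proof (segment_dist_start x z gamma t Hg Ht) as Ex.
  pose proof (segment_dist_end x z gamma t Hg Ht) as Ez.
  pose proof (dist_sym (gamma t) x); pose proof (dist_sym z (gamma t)).
  pose proof (dist_sym p x); pose proof (dist_sym z x); pose proof (dist_sym z p).
  destruct (hyperbolic_cases x p z (gamma t)); unfold t, gromov in *; lra.
Qed.

Lemma near_segment_mono x z gamma p r r' :
  r <= r' -> near_segment d x z gamma p r -> near_segment d x z gamma p r'.
Proof. intros Hr [t [Ht Hp]]; exists t; split; [exact Ht | lra]. Qed.

Lemma gromov_corner_le a b x z :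
  gromov d a x b <= delta -> gromov d b a z <= delta -> d a b > 3 * delta ->
  gromov d a x z <= 2 * delta.
Proof.
  intros Ha Hb Hab.
  pose proof (gromov_add_dist a b z) as Eab.
  rewrite (gromov_comm b z a) in Eab.
  destruct (hyperbolic_cases a x z b); lra.
Qed.

Lemma reduced_at_gromov x0 u v :
  isometry d u -> reduced_at d delta x0 u v ->
  gromov d (u x0) x0 (u (v x0)) <= delta.
Proof.
  intros Hu Huv.
  pose proof Hu as (_ & ui & _ & Uui).
  rewrite <- (Uui x0) at 2.
  rewrite gromov_isometry by exact Hu.
  exact (Huv (ui x0) (Uui x0)).
Qed.

Lemma reduced_near_segment x0 u v w z gamma :
  isometry d u -> isometry d v ->
  reduced_at d delta x0 u v -> reduced_at d delta x0 v w ->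
  d (v x0) x0 > 3 * delta -> u (v (w x0)) = z ->
  geodesic_segment d x0 z gamma ->
  near_segment d x0 z gamma (u x0) (4 * delta) /\
  near_segment d x0 z gamma (u (v x0)) (4 * delta).
Proof.
  intros Hu Hv Huv Hvw Hlen Hz Hg.
  assert (Ha : gromov d (u x0) x0 (u (v x0)) <= delta)
    by exact (reduced_at_gromov x0 u v Hu Huv).
  assert (Hb : gromov d (u (v x0)) (u x0) z <= delta).
  { rewrite <- Hz, gromov_isometry by exact Hu.
    exact (reduced_at_gromov x0 v w Hv Hvw). }
  assert (Hab : d (u x0) (u (v x0)) > 3 * delta).
  { destruct Hu as [Du _]; rewrite Du, dist_sym; exact Hlen. }
  assert (Ca : gromov d (u x0) x0 z <= 2 * delta)
    by exact (gromov_corner_le _ _ _ _ Ha Hb Hab).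
  assert (Cb : gromov d (u (v x0)) x0 z <= 2 * delta).
  { rewrite gromov_comm in Ha |- *; rewrite gromov_comm in Hb.
    rewrite dist_sym in Hab.
    exact (gromov_corner_le _ _ _ _ Hb Ha Hab). }
  split; eapply near_segment_mono; try apply near_segment_gromov; eauto; lra.
Qed.

End Hyperbolic.

Theorem lemma2p32 (X : Type) (d : X -> X -> R) (delta : R) (x0 : X)
  (u1 u2 v w1 w2 g : X -> X) :
  is_metric d -> geodesic_space d -> 0 <= delta -> hyperbolic d delta ->
  isometry d u1 -> isometry d u2 -> isometry d v ->
  isometry d w1 -> isometry d w2 ->
  (forall x, g x = u1 (v (w1 x))) ->
  (forall x, g x = u2 (v (w2 x))) ->
  reduced_at d delta x0 u1 v -> reduced_at d delta x0 u2 v ->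
  reduced_at d delta x0 v w1 -> reduced_at d delta x0 v w2 ->
  d (v x0) x0 > 26 * delta ->
  d (u1 x0) (u2 x0) <= d (v x0) x0 ->
  d (u1 x0) x0 <= d (u2 x0) x0 ->
  forall gamma : R -> X, geodesic_segment d x0 (g x0) gamma ->
    near_segment d x0 (g x0) gamma (u1 x0) (6 * delta) /\
    near_segment d x0 (g x0) gamma (u2 x0) (6 * delta) /\
    near_segment d x0 (g x0) gamma (u1 (v x0)) (6 * delta) /\
    near_segment d x0 (g x0) gamma (u2 (v x0)) (6 * delta).
Proof.
  intros Hm _ Hdelta Hh Hu1 Hu2 Hv _ _ Hg1 Hg2 Hu1v Hu2v Hvw1 Hvw2 Hlen _ _
    gamma Hgamma.
  assert (Hlen3 : d (v x0) x0 > 3 * delta) by lra.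
  assert (Hmono : forall p, near_segment d x0 (g x0) gamma p (4 * delta) ->
            near_segment d x0 (g x0) gamma p (6 * delta))
    by (intros p; apply near_segment_mono; lra).
  destruct (reduced_near_segment X d delta Hm Hh x0 u1 v w1 (g x0) gamma
              Hu1 Hv Hu1v Hvw1 Hlen3 (eq_sym (Hg1 x0)) Hgamma) as [N1 N1v].
  destruct (reduced_near_segment X d delta Hm Hh x0 u2 v w2 (g x0) gamma
              Hu2 Hv Hu2v Hvw2 Hlen3 (eq_sym (Hg2 x0)) Hgamma) as [N2 N2v].
  repeat split; apply Hmono; assumption.
Qed.
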